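(* Let $G=(V,q)$ be a reversible, stochastically complete graph and let $\widetilde G=(V\times V,\widetilde q)$ be a coupling graph of $G$ with heat semigroup $\widetilde P_t$. Let $W:=V^2\setminus\{(x,x):x\in V\}$ and suppose $\widetilde P_t1_W\to0$ pointwise as $t\to\infty$. Then every bounded function $\phi:V\to\mathbb R$ with $\Delta\phi=0$ is constant.
   Context: A graph $G=(V,q)$ consists of a countable set $V$ and a function $q:V\times V\to[0,\infty)$ such that $\#\{y:q(x,y)>0\}<\infty$ for every $x\in V$; its Laplacian is $\Delta f(x)=\sum_y q(x,y)(f(y)-f(x))$. $G$ is reversible if there is $m:V\to(0,\infty)$ with $q(x,y)m(x)=q(y,x)m(y)$. Heat semigroup of any graph: for finite $S$ let $q_S(x,y)=q(x,y)1_S(x)$ with Laplacian $\Delta_S$ and $P^S_tf=\sum_{k\ge0}t^k\Delta_S^k(f1_S)/k!$; for bounded $f$, $P_tf=\lim_iP_t^{S_i}f$ pointwise along any increasing exhaustion by finite sets. $G$ is stochastically complete if $P_t1=1$ for all $t\ge0$. $(f\otimes g)(x,y)=f(x)g(y)$. A coupling graph of $G$ is a graph $\widetilde G=(V\times V,\widetilde q)$ whose Laplacian satisfies $\widetilde\Delta(f\otimes 1)=\Delta f\otimes 1$ and $\widetilde\Delta(1\otimes f)=1\otimes\Delta f$ for all $f:V\to\mathbb R$. *)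

From Stdlib Require Import Reals Lra Arith Factorial List Classical ClassicalEpsilon.
Import ListNotations.
Open Scope R_scope.

(* A graph G = (V,q) is represented by q : V -> V -> R together with, for
   each x, a duplicate-free list nb x containing every y with q x y > 0
   (this witnesses local finiteness; entries with q x y = 0 are allowed and
   contribute nothing to sums).  V is countable: it injects into nat. *)
Definition is_graph {V : Type} (q : V -> V -> R) (nb : V -> list V) : Prop :=
  (exists e : V -> nat, forall x y, e x = e y -> x = y) /\
  (forall x y, 0 <= q x y) /\
  (forall x, NoDup (nb x)) /\
  (forall x y, 0 < q x y -> In y (nb x)).

Definition lap {V : Type} (q : V -> V -> R) (nb : V -> list V)
  (f : V -> R) (x : V) : R :=
  fold_right (fun y acc => q x y * (f y - f x) + acc) 0 (nb x).

Definition reversible {V : Type} (q : V -> V -> R) : Prop :=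
  exists m : V -> R, (forall x, 0 < m x) /\
    (forall x y, q x y * m x = q y x * m y).

Definition ind {V : Type} (S : list V) (x : V) : R :=
  if excluded_middle_informative (In x S) then 1 else 0.

(* Laplacian of q_S(x,y) = q(x,y) 1_S(x) *)
Definition lapS {V : Type} (q : V -> V -> R) (nb : V -> list V)
  (S : list V) (g : V -> R) (x : V) : R :=
  ind S x * lap q nb g x.

(* k-th term of P^S_t f (x) = sum_k t^k Delta_S^k (f 1_S)(x) / k! *)
Definition heat_term {V : Type} (q : V -> V -> R) (nb : V -> list V)
  (S : list V) (t : R) (f : V -> R) (x : V) (k : nat) : R :=
  t ^ k / INR (fact k) * Nat.iter k (lapS q nb S) (fun y => ind S y * f y) x.

Definition exhaustion {V : Type} (E : nat -> list V) : Prop :=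
  (forall i y, In y (E i) -> In y (E (Datatypes.S i))) /\
  (forall y, exists i, In y (E i)).

(* heat q nb t f x l  :<->  (P_t f)(x) = l, i.e. along every increasing
   exhaustion (E_i) by finite sets, P^{E_i}_t f (x) -> l. *)
Definition heat {V : Type} (q : V -> V -> R) (nb : V -> list V)
  (t : R) (f : V -> R) (x : V) (l : R) : Prop :=
  forall E : nat -> list V, exhaustion E ->
    exists a : nat -> R,
      (forall i, infinite_sum (heat_term q nb (E i) t f x) (a i)) /\
      Un_cv a l.

Definition stoch_complete {V : Type} (q : V -> V -> R) (nb : V -> list V) : Prop :=
  forall t x, 0 <= t -> heat q nb t (fun _ => 1) x 1.

Definition is_coupling {V : Type} (q : V -> V -> R) (nb : V -> list V)
  (qt : V * V -> V * V -> R) (nbt : V * V -> list (V * V)) : Prop :=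
  is_graph qt nbt /\
  forall (f : V -> R) (x y : V),
    lap qt nbt (fun z => f (fst z)) (x, y) = lap q nb f x /\
    lap qt nbt (fun z => f (snd z)) (x, y) = lap q nb f y.

Definition offdiag {V : Type} (z : V * V) : R :=
  if excluded_middle_informative (fst z = snd z) then 0 else 1.

From Stdlib Require Import Reals Lra Lia List Factorial Binomial.
From Stdlib Require Import FunctionalExtensionality ClassicalEpsilon.
From Coquelicot Require Import Coquelicot.
Import ListNotations.
Open Scope R_scope.

(* Let phi be bounded (|phi| <= M) and harmonic, and psi(x,y) := phi(x) - phi(y).
   Because the coupling Laplacian acts on functions of one coordinate as the
   Laplacian of G, psi is harmonic on the coupling graph, and psi <= 2M 1_W.

   Finite-volume heat semigroups are controlled by uniformization: on a finite set
   D with all degrees <= c, the killed Laplacian is Delta_D = c (N - I) where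
   N = I + Delta_D / c is a positive operator fixing constants.  The operator
   binomial theorem and a Cauchy product identify the defining heat series:
     exp(ct) P^D_t f = sum_n (ct)^n/n! N^n (1_D f).
   Positivity of N together with the coupling identity give, for every n and
   x, y in a finite set F,
     psi(x,y) <= 2M N~^n(1_{FxF} 1_W)(x,y) + 2M (2 - N^n 1_F(x) - N^n 1_F(y)),
   and summing against (ct)^n/n! turns this into the same bound for the heat
   semigroups killed outside F x F and F.  Letting F exhaust V and using
   stochastic completeness yields psi(x,y) <= 2M P~_t 1_W(x,y), which tends to 0.
   Hence phi(x) <= phi(y) for all x, y. *)

Definition lsum {X : Type} (f : X -> R) (l : list X) : R :=
  fold_right (fun y acc => f y + acc) 0 l.

Lemma lsum_nonneg {X : Type} (f : X -> R) (l : list X) :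
  (forall y, 0 <= f y) -> 0 <= lsum f l.
Proof. intros Hf; induction l as [|y l IH]; simpl; [lra|]. specialize (Hf y); lra. Qed.

Lemma lsum_ge_term {X : Type} (f : X -> R) (l : list X) x :
  (forall y, 0 <= f y) -> In x l -> f x <= lsum f l.
Proof.
  intros Hf Hin; induction l as [|y l IH]; simpl in *; [tauto|].
  destruct Hin as [<-|Hin].
  - pose proof (lsum_nonneg f l Hf); lra.
  - specialize (IH Hin); specialize (Hf y); lra.
Qed.

Section Laplacian.
Context {X : Type} (q : X -> X -> R) (nb : X -> list X).

Definition deg (x : X) : R := lsum (q x) (nb x).

Lemma lap_lin a b g h x :
  lap q nb (fun y => a * g y + b * h y) x = a * lap q nb g x + b * lap q nb h x.
Proof. unfold lap; induction (nb x) as [|y l IH]; simpl; [ring|]. rewrite IH; ring. Qed.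

Lemma lap_const a x : lap q nb (fun _ => a) x = 0.
Proof. unfold lap; induction (nb x) as [|y l IH]; simpl; [ring|]. rewrite IH; ring. Qed.

Lemma lap_minus g h x : lap q nb (fun y => g y - h y) x = lap q nb g x - lap q nb h x.
Proof.
  replace (fun y => g y - h y) with (fun y => 1 * g y + (-1) * h y)
    by (extensionality y; ring).
  rewrite lap_lin; ring.
Qed.

(* Delta g(x) = sum_y q(x,y) g(y) - deg(x) g(x): the source of positivity of N. *)
Lemma lap_as_sum g x :
  lap q nb g x = lsum (fun y => q x y * g y) (nb x) - deg x * g x.
Proof. unfold lap, deg, lsum; induction (nb x) as [|y l IH]; simpl; [ring|]. rewrite IH; ring. Qed.

Hypothesis q_nonneg : forall a b, 0 <= q a b.

Lemma deg_nonneg x : 0 <= deg x.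
Proof. apply lsum_nonneg; auto. Qed.

Lemma lap_bound h B x : (forall y, Rabs (h y) <= B) -> Rabs (lap q nb h x) <= 2 * B * deg x.
Proof.
  intros Hh; unfold lap, deg, lsum; induction (nb x) as [|y l IH]; simpl.
  - rewrite Rabs_R0; lra.
  - pose proof (q_nonneg x y); pose proof (Hh y); pose proof (Hh x).
    assert (Rabs (h y - h x) <= 2 * B).
    { unfold Rminus; eapply Rle_trans; [apply Rabs_triang|]. rewrite Rabs_Ropp; lra. }
    eapply Rle_trans; [apply Rabs_triang|].
    rewrite Rabs_mult, (Rabs_right (q x y)) by lra. nra.
Qed.

End Laplacian.

Lemma ind_cases {X : Type} (D : list X) x :
  (In x D /\ ind D x = 1) \/ (~ In x D /\ ind D x = 0).
Proof. unfold ind; destruct (excluded_middle_informative (In x D)); auto. Qed.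

Lemma ind_in {X : Type} (D : list X) x : In x D -> ind D x = 1.
Proof. unfold ind; destruct (excluded_middle_informative (In x D)); tauto. Qed.

Lemma ind_notin {X : Type} (D : list X) x : ~ In x D -> ind D x = 0.
Proof. unfold ind; destruct (excluded_middle_informative (In x D)); tauto. Qed.

(* Pascal's rule in summed form: the induction step of the binomial theorem
   for a + L, where L acts on the sequence u by shifting. *)
Lemma pascal_recombine (a : R) (u : nat -> R) (n : nat) :
  sum_f_R0 (fun k => Binomial.C (S n) k * a ^ (S n - k) * u k) (S n) =
  a * sum_f_R0 (fun k => Binomial.C n k * a ^ (n - k) * u k) n
  + sum_f_R0 (fun k => Binomial.C n k * a ^ (n - k) * u (S k)) n.
Proof.
  destruct n as [|m].
  - simpl. rewrite !C_n_0, !C_n_n. ring.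
  - set (f := fun n k => Binomial.C n k * a ^ (n - k)).
    change (sum_f_R0 (fun k => f (S (S m)) k * u k) (S (S m)) =
            a * sum_f_R0 (fun k => f (S m) k * u k) (S m)
            + sum_f_R0 (fun k => f (S m) k * u (S k)) (S m)).
    rewrite (decomp_sum (fun k => f (S (S m)) k * u k)),
            (decomp_sum (fun k => f (S m) k * u k)) by lia; simpl pred.
    rewrite (tech5 (fun i => f (S (S m)) (S i) * u (S i))),
            (tech5 (fun k => f (S m) k * u (S k))).
    replace (sum_f_R0 (fun i => f (S (S m)) (S i) * u (S i)) m)
      with (a * sum_f_R0 (fun i => f (S m) (S i) * u (S i)) m
            + sum_f_R0 (fun k => f (S m) k * u (S k)) m).
    + unfold f; rewrite !C_n_0, !C_n_n, !Nat.sub_0_r, !Nat.sub_diag.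
      change (a ^ S (S m)) with (a * a ^ S m); ring.
    + rewrite scal_sum, <- plus_sum; apply sum_eq; intros k Hk; unfold f.
      rewrite <- (pascal (S m) k) by lia.
      replace (S (S m) - S k)%nat with (S (S m - S k)) by lia.
      replace (S m - k)%nat with (S (S m - S k)) by lia.
      simpl; ring.
Qed.

Lemma exp_series x : is_series (fun n => x ^ n / INR (fact n)) (exp x).
Proof.
  apply is_series_ext with (fun n => / INR (fact n) * x ^ n).
  - intro n; unfold Rdiv; apply Rmult_comm.
  - apply is_pseries_R, is_exp_Reals.
Qed.

Lemma Rabs_exp_term x n : Rabs (x ^ n / INR (fact n)) = Rabs x ^ n / INR (fact n).
Proof.
  rewrite Rabs_div, RPow_abs, (Rabs_pos_eq (INR (fact n)))
    by (apply pos_INR || apply INR_fact_neq_0).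
  reflexivity.
Qed.

Lemma is_series_le_compat (a b : nat -> R) (la lb : R) :
  is_series a la -> is_series b lb -> (forall n, a n <= b n) -> la <= lb.
Proof.
  intros Ha Hb Hab; apply is_series_Reals in Ha, Hb.
  eapply Rle_cv_lim; [|exact Ha|exact Hb]. intro N; apply sum_Rle; auto.
Qed.

Section Uniformization.
Context {X : Type} (q : X -> X -> R) (nb : X -> list X) (D : list X) (c : R).

(* One step of the uniformized chain killed outside D: N = I + Delta_D / c. *)
Definition unif_step (g : X -> R) (x : X) : R := g x + lapS q nb D g x / c.

Definition unif_iter (n : nat) (g : X -> R) : X -> R := Nat.iter n unif_step g.

Lemma unif_iter_succ n g : unif_iter (S n) g = unif_step (unif_iter n g).
Proof. reflexivity. Qed.

Lemma lapS_lin a b g h x :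
  lapS q nb D (fun y => a * g y + b * h y) x = a * lapS q nb D g x + b * lapS q nb D h x.
Proof. unfold lapS; rewrite lap_lin; ring. Qed.

Lemma lapS_sum (a : nat -> R) (G : nat -> X -> R) n x :
  lapS q nb D (fun y => sum_f_R0 (fun k => a k * G k y) n) x =
  sum_f_R0 (fun k => a k * lapS q nb D (G k) x) n.
Proof.
  revert x; induction n as [|n IH]; intro x; simpl.
  - replace (fun y => a 0%nat * G 0%nat y) with (fun y => a 0%nat * G 0%nat y + 0 * G 0%nat y)
      by (extensionality y; ring).
    rewrite lapS_lin; ring.
  - replace (fun y => sum_f_R0 (fun k => a k * G k y) n + a (S n) * G (S n) y)
      with (fun y => 1 * sum_f_R0 (fun k => a k * G k y) n + a (S n) * G (S n) y)
      by (extensionality y; ring).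
    rewrite lapS_lin, IH; ring.
Qed.

Lemma unif_iter_lin n a b g h x :
  unif_iter n (fun y => a * g y + b * h y) x = a * unif_iter n g x + b * unif_iter n h x.
Proof.
  revert x; induction n as [|n IH]; intro x; [reflexivity|].
  rewrite !unif_iter_succ.
  replace (unif_iter n (fun y => a * g y + b * h y))
    with (fun y => a * unif_iter n g y + b * unif_iter n h y) by (extensionality y; auto).
  unfold unif_step, Rdiv; rewrite lapS_lin; ring.
Qed.

Lemma unif_iter_const n a x : unif_iter n (fun _ => a) x = a.
Proof.
  revert x; induction n as [|n IH]; intro x; [reflexivity|].
  rewrite unif_iter_succ.
  replace (unif_iter n (fun _ => a)) with (fun _ : X => a) by (extensionality y; auto).
  unfold unif_step, lapS; rewrite lap_const; unfold Rdiv; ring.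
Qed.

Lemma unif_iter_outside n g x : ~ In x D -> unif_iter n g x = g x.
Proof.
  intro Hx; induction n as [|n IH]; [reflexivity|].
  rewrite unif_iter_succ; unfold unif_step, lapS.
  rewrite ind_notin, IH by auto; unfold Rdiv; ring.
Qed.

Lemma unif_iter_harmonic n g x : (forall y, lap q nb g y = 0) -> unif_iter n g x = g x.
Proof.
  intro Hg; revert x; induction n as [|n IH]; intro x; [reflexivity|].
  rewrite unif_iter_succ.
  replace (unif_iter n g) with g by (extensionality y; auto).
  unfold unif_step, lapS; rewrite Hg; unfold Rdiv; ring.
Qed.

(* c^n N^n = (c + Delta_D)^n, expanded by the binomial theorem. *)
Lemma unif_iter_binomial n g x :
  c <> 0 ->
  c ^ n * unif_iter n g x =
  sum_f_R0 (fun k => Binomial.C n k * c ^ (n - k) * Nat.iter k (lapS q nb D) g x) n.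
Proof.
  intro Hc; revert x; induction n as [|n IH]; intro x.
  - simpl; rewrite C_n_0; ring.
  - rewrite pascal_recombine, <- IH, unif_iter_succ.
    change (fun k => Binomial.C n k * c ^ (n - k) * Nat.iter (S k) (lapS q nb D) g x)
      with (fun k => Binomial.C n k * c ^ (n - k) * lapS q nb D (Nat.iter k (lapS q nb D) g) x).
    rewrite <- (lapS_sum (fun k => Binomial.C n k * c ^ (n - k))
                 (fun k => Nat.iter k (lapS q nb D) g)).
    replace (fun y => sum_f_R0
               (fun k => Binomial.C n k * c ^ (n - k) * Nat.iter k (lapS q nb D) g y) n)
      with (fun y => c ^ n * unif_iter n g y + 0 * g y) by (extensionality y; rewrite IH; ring).
    rewrite lapS_lin; unfold unif_step; simpl; field; auto.
Qed.

(* The n-th Cauchy coefficient of (heat series) x (series of exp(ct)) is the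
   n-th term of the uniformized series. *)
Lemma heat_cauchy_coefficient t g x n :
  c <> 0 ->
  sum_f_R0 (fun k => heat_term q nb D t g x k * ((c * t) ^ (n - k) / INR (fact (n - k)))) n
  = (c * t) ^ n / INR (fact n) * unif_iter n (fun y => ind D y * g y) x.
Proof.
  intro Hc.
  replace ((c * t) ^ n / INR (fact n) * unif_iter n (fun y => ind D y * g y) x)
    with (t ^ n / INR (fact n) * (c ^ n * unif_iter n (fun y => ind D y * g y) x))
    by (rewrite Rpow_mult_distr; unfold Rdiv; ring).
  rewrite unif_iter_binomial, scal_sum by auto; apply sum_eq; intros k Hk.
  unfold heat_term, Binomial.C.
  replace (t ^ n) with (t ^ k * t ^ (n - k)) by (rewrite <- pow_add; f_equal; lia).
  pose proof (INR_fact_neq_0 k); pose proof (INR_fact_neq_0 (n - k));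
    pose proof (INR_fact_neq_0 n).
  rewrite Rpow_mult_distr; field; auto.
Qed.

Hypothesis q_nonneg : forall a b, 0 <= q a b.
Hypothesis c_pos : 0 < c.
Hypothesis deg_le_c : forall x, In x D -> deg q nb x <= c.

(* Positivity: on D, N k(x) = (1 - deg(x)/c) k(x) + sum_y q(x,y) k(y) / c. *)
Lemma unif_step_nonneg k x : (forall y, 0 <= k y) -> 0 <= unif_step k x.
Proof.
  intros Hk; unfold unif_step, lapS.
  destruct (ind_cases D x) as [[Hin ->]|[_ ->]]; [|specialize (Hk x); unfold Rdiv; lra].
  rewrite lap_as_sum.
  pose proof (deg_le_c x Hin) as Hdeg.
  pose proof (lsum_nonneg (fun y => q x y * k y) (nb x)
                (fun y => Rmult_le_pos _ _ (q_nonneg x y) (Hk y))).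
  set (s := lsum _ _) in *.
  replace (k x + 1 * (s - deg q nb x * k x) / c) with (k x * ((c - deg q nb x) / c) + s / c)
    by (field; lra).
  pose proof (Hk x).
  assert (0 <= (c - deg q nb x) / c) by (apply Rdiv_le_0_compat; lra).
  assert (0 <= s / c) by (apply Rdiv_le_0_compat; lra).
  nra.
Qed.

Lemma unif_iter_nonneg n k x : (forall y, 0 <= k y) -> 0 <= unif_iter n k x.
Proof.
  intros Hk; revert x; induction n as [|n IH]; intro x; [apply Hk|].
  rewrite unif_iter_succ; apply unif_step_nonneg; auto.
Qed.

Lemma unif_iter_mono n g h x : (forall y, g y <= h y) -> unif_iter n g x <= unif_iter n h x.
Proof.
  intros Hgh.
  assert (Hdiff : forall y, 0 <= 1 * h y + -1 * g y) by (intro y; specialize (Hgh y); lra).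
  pose proof (unif_iter_nonneg n _ x Hdiff) as Hpos.
  rewrite unif_iter_lin in Hpos; lra.
Qed.

Lemma lapS_iter_bound g G n x :
  (forall y, Rabs (g y) <= G) -> Rabs (Nat.iter n (lapS q nb D) g x) <= (2 * c) ^ n * G.
Proof.
  intros Hg; revert x; induction n as [|n IH]; intro x; simpl; [rewrite Rmult_1_l; apply Hg|].
  assert (HG : 0 <= (2 * c) ^ n * G) by (eapply Rle_trans; [apply Rabs_pos|apply (IH x)]).
  unfold lapS; destruct (ind_cases D x) as [[Hin ->]|[_ ->]].
  - rewrite Rmult_1_l; eapply Rle_trans; [apply lap_bound; eauto|].
    pose proof (deg_le_c x Hin); pose proof (deg_nonneg q nb q_nonneg x); nra.
  - rewrite Rmult_0_l, Rabs_R0; nra.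
Qed.

Lemma heat_terms_abs_summable t g G x :
  (forall y, Rabs (g y) <= G) -> ex_series (fun n => Rabs (heat_term q nb D t g x n)).
Proof.
  intros Hg.
  assert (HgD : forall y, Rabs (ind D y * g y) <= G).
  { intro y; pose proof (Rabs_pos (g y)); pose proof (Hg y).
    destruct (ind_cases D y) as [[_ ->]|[_ ->]]; rewrite ?Rmult_1_l, ?Rmult_0_l, ?Rabs_R0; lra. }
  apply (@ex_series_le R_AbsRing R_CompleteNormedModule)
    with (b := fun n => G * ((Rabs t * (2 * c)) ^ n / INR (fact n))).
  - intro n.
    change (norm (Rabs (heat_term q nb D t g x n)))
      with (Rabs (Rabs (heat_term q nb D t g x n))).
    rewrite Rabs_Rabsolu; unfold heat_term.
    rewrite Rabs_mult, Rabs_exp_term, Rpow_mult_distr.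
    pose proof (lapS_iter_bound _ G n x HgD).
    assert (0 <= Rabs t ^ n / INR (fact n))
      by (apply Rdiv_le_0_compat; [apply pow_le, Rabs_pos|apply lt_0_INR, lt_O_fact]).
    replace (G * (Rabs t ^ n * (2 * c) ^ n / INR (fact n)))
      with (Rabs t ^ n / INR (fact n) * ((2 * c) ^ n * G)) by (unfold Rdiv; ring).
    apply Rmult_le_compat_l; auto.
  - exists (G * exp (Rabs t * (2 * c))); exact (is_series_scal_l G _ _ (exp_series _)).
Qed.

Lemma heat_series_uniformized t g G x (H : R) :
  (forall y, Rabs (g y) <= G) ->
  is_series (heat_term q nb D t g x) H ->
  is_series (fun n => (c * t) ^ n / INR (fact n) * unif_iter n (fun y => ind D y * g y) x)
            (exp (c * t) * H).
Proof.
  intros Hg HH.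
  assert (Hexp : ex_series (fun n => Rabs ((c * t) ^ n / INR (fact n)))).
  { eexists; eapply is_series_ext; [|apply exp_series].
    intro n; rewrite Rabs_exp_term; reflexivity. }
  pose proof (is_series_mult _ _ _ _ HH (exp_series (c * t))
                (heat_terms_abs_summable t g G x Hg) Hexp) as Hprod.
  rewrite (Rmult_comm (exp _)); eapply is_series_ext; [|exact Hprod].
  intro n; apply heat_cauchy_coefficient; lra.
Qed.

End Uniformization.

Section Coupling.
Context {V : Type} (q : V -> V -> R) (nb : V -> list V)
  (qt : V * V -> V * V -> R) (nbt : V * V -> list (V * V)) (F : list V) (c : R).
Hypothesis q_nonneg : forall a b, 0 <= q a b.
Hypothesis qt_nonneg : forall a b, 0 <= qt a b.
Hypothesis coupling : forall (f : V -> R) (x y : V),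
  lap qt nbt (fun z => f (fst z)) (x, y) = lap q nb f x /\
  lap qt nbt (fun z => f (snd z)) (x, y) = lap q nb f y.
Hypothesis c_pos : 0 < c.
Hypothesis deg_F : forall x, In x F -> deg q nb x <= c.
Hypothesis deg_FF : forall z, In z (list_prod F F) -> deg qt nbt z <= c.

Local Notation FF := (list_prod F F).
(* Probability that the uniformized chain (resp. coupled chain) started at x
   (resp. z) stays in F (resp. F x F) for n steps. *)
Local Notation survival n x := (unif_iter q nb F c n (fun y => ind F y * 1) x).
Local Notation coupled_survival n z := (unif_iter qt nbt FF c n (fun w => ind FF w * 1) z).

Lemma survival_bounds n x : 0 <= survival n x <= 1.
Proof.
  assert (Hind : forall y, 0 <= ind F y * 1 <= 1)
    by (intro y; destruct (ind_cases F y) as [[_ ->]|[_ ->]]; lra).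
  split.
  - apply unif_iter_nonneg; auto; apply Hind.
  - apply Rle_trans with (unif_iter q nb F c n (fun _ => 1) x).
    + apply unif_iter_mono; auto; apply Hind.
    + rewrite unif_iter_const; lra.
Qed.

Lemma coupled_unif_step f x y : In (x, y) FF ->
  unif_step qt nbt FF c (fun w => 1 * f (fst w) + 1 * f (snd w) - 1) (x, y)
  = unif_step q nb F c f x + unif_step q nb F c f y - 1.
Proof.
  intros Hxy; pose proof Hxy as [Hx Hy]%in_prod_iff.
  unfold unif_step, lapS; simpl; rewrite !ind_in by auto.
  rewrite lap_minus, lap_lin, lap_const.
  destruct (coupling f x y) as [-> ->]; unfold Rdiv; ring.
Qed.

Lemma coupled_survival_lower n z :
  ind FF z * (survival n (fst z) + survival n (snd z) - 1) <= coupled_survival n z.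
Proof.
  assert (Hpos : forall n w, 0 <= coupled_survival n w).
  { intros; apply unif_iter_nonneg; auto.
    intro w'; destruct (ind_cases FF w') as [[_ ->]|[_ ->]]; lra. }
  revert z; induction n as [|n IH]; intros [x y].
  - simpl; destruct (ind_cases FF (x, y)) as [[Hxy ->]|[_ ->]]; [|lra].
    apply in_prod_iff in Hxy; rewrite !ind_in by tauto; lra.
  - destruct (ind_cases FF (x, y)) as [[Hxy ->]|[_ ->]]; [|rewrite Rmult_0_l; apply Hpos].
    set (k := fun w : V * V => 1 * survival n (fst w) + 1 * survival n (snd w) - 1).
    assert (Hk : forall w, k w <= coupled_survival n w).
    { intros [a b]; unfold k; simpl.
      destruct (ind_cases FF (a, b)) as [[_ Hab]|[Hab _]].
      - specialize (IH (a, b)); rewrite Hab in IH; simpl in IH; lra.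
      - pose proof (Hpos n (a, b)).
        pose proof (survival_bounds n a); pose proof (survival_bounds n b).
        destruct (classic (In a F)) as [Ha|Ha].
        + assert (Hb : ~ In b F) by (intro Hb; apply Hab, in_prod; auto).
          rewrite (unif_iter_outside _ _ _ _ n _ b Hb), ind_notin by auto; lra.
        + rewrite (unif_iter_outside _ _ _ _ n _ a Ha), ind_notin by auto; lra. }
    pose proof (unif_iter_mono qt nbt FF c qt_nonneg c_pos deg_FF 1 _ _ (x, y) Hk) as Hstep.
    simpl in Hstep; unfold k in Hstep; rewrite coupled_unif_step in Hstep by auto.
    rewrite Rmult_1_l, !unif_iter_succ; exact Hstep.
Qed.

Lemma coupled_difference_step psi B x0 y0 n :
  (forall w, lap qt nbt psi w = 0) -> 0 <= B -> (forall z, psi z <= B * offdiag z) ->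
  In x0 F -> In y0 F ->
  psi (x0, y0) <= B * unif_iter qt nbt FF c n (fun z => ind FF z * offdiag z) (x0, y0)
                  + B * (2 - survival n x0 - survival n y0).
Proof.
  intros Hpsi HB Hoff Hx Hy.
  assert (Hbound : forall z, psi z <= B * (ind FF z * offdiag z) + (-B) * (ind FF z * 1) + B).
  { intro z; specialize (Hoff z); assert (offdiag z <= 1)
      by (unfold offdiag; destruct (excluded_middle_informative _); lra).
    destruct (ind_cases FF z) as [[_ ->]|[_ ->]]; nra. }
  rewrite <- (unif_iter_harmonic qt nbt FF c n psi (x0, y0) Hpsi).
  eapply Rle_trans;
    [apply (unif_iter_mono qt nbt FF c qt_nonneg c_pos deg_FF n _ _ (x0, y0) Hbound)|].
  replace (fun z => B * (ind FF z * offdiag z) + - B * (ind FF z * 1) + B)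
    with (fun z => 1 * (B * (ind FF z * offdiag z) + - B * (ind FF z * 1)) + B * 1)
    by (extensionality z; ring).
  rewrite unif_iter_lin, (unif_iter_lin _ _ _ _ n B (-B)), unif_iter_const.
  pose proof (coupled_survival_lower n (x0, y0)) as Hlow.
  rewrite ind_in in Hlow by (apply in_prod; auto); simpl in Hlow.
  nra.
Qed.

Lemma coupled_difference_heat psi B x0 y0 t (HA HBx HBy : R) :
  0 <= t -> (forall w, lap qt nbt psi w = 0) -> 0 <= B -> (forall z, psi z <= B * offdiag z) ->
  In x0 F -> In y0 F ->
  is_series (heat_term qt nbt FF t offdiag (x0, y0)) HA ->
  is_series (heat_term q nb F t (fun _ => 1) x0) HBx ->
  is_series (heat_term q nb F t (fun _ => 1) y0) HBy ->
  psi (x0, y0) <= B * HA + B * (2 - HBx - HBy).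
Proof.
  intros Ht Hpsi HB Hoff Hx Hy SA SX SY.
  assert (Hoff1 : forall z : V * V, Rabs (offdiag z) <= 1)
    by (intro z; unfold offdiag; destruct (excluded_middle_informative _);
        rewrite ?Rabs_R0, ?Rabs_R1; lra).
  assert (Hone : forall y : V, Rabs 1 <= 1) by (intro; rewrite Rabs_R1; lra).
  pose proof (heat_series_uniformized qt nbt FF c qt_nonneg c_pos deg_FF t _ 1 _ _ Hoff1 SA)
    as UA.
  pose proof (heat_series_uniformized q nb F c q_nonneg c_pos deg_F t _ 1 _ _ Hone SX) as UX.
  pose proof (heat_series_uniformized q nb F c q_nonneg c_pos deg_F t _ 1 _ _ Hone SY) as UY.
  pose proof (exp_series (c * t)) as UE.
  pose proof (is_series_scal_r (psi (x0, y0)) _ _ UE) as Hlhs.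
  pose proof (is_series_plus _ _ _ _ (is_series_scal_l B _ _ UA)
               (is_series_scal_l B _ _ (is_series_minus _ _ _ _
                 (is_series_minus _ _ _ _ (is_series_scal_l 2 _ _ UE) UX) UY))) as Hrhs.
  assert (He : 0 < exp (c * t)) by apply exp_pos.
  apply Rmult_le_reg_l with (exp (c * t)); auto.
  replace (exp (c * t) * (B * HA + B * (2 - HBx - HBy)))
    with (B * (exp (c * t) * HA)
          + B * (2 * exp (c * t) + - (exp (c * t) * HBx) + - (exp (c * t) * HBy)))
    by ring.
  apply (is_series_le_compat _ _ _ _ Hlhs Hrhs); intro n.
  pose proof (coupled_difference_step psi B x0 y0 n Hpsi HB Hoff Hx Hy).
  change plus with Rplus; change scal with Rmult; change opp with Ropp.
  set (w := (c * t) ^ n / INR (fact n)).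
  assert (0 <= w) by (apply Rdiv_le_0_compat; [apply pow_le; nra|apply lt_0_INR, lt_O_fact]).
  apply Rle_trans with (w * (B * unif_iter qt nbt FF c n (fun z => ind FF z * offdiag z) (x0, y0)
                             + B * (2 - survival n x0 - survival n y0)));
    [apply Rmult_le_compat_l; auto | right; ring].
Qed.

End Coupling.

Lemma exhaustion_mono {X : Type} (F : nat -> list X) i j y :
  exhaustion F -> (i <= j)%nat -> In y (F i) -> In y (F j).
Proof. intros [Hinc _] Hij Hy; induction Hij; auto. Qed.

Lemma exhaustion_eventually {X : Type} (F : nat -> list X) y :
  exhaustion F -> exists i0, forall i, (i0 <= i)%nat -> In y (F i).
Proof.
  intros HF; destruct (proj2 HF y) as [i0 Hi0].
  exists i0; intros i Hi; eapply exhaustion_mono; eauto.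
Qed.

Lemma exhaustion_prod {X : Type} (F : nat -> list X) :
  exhaustion F -> exhaustion (fun i => list_prod (F i) (F i)).
Proof.
  intros HF; split.
  - intros i [x y] [Hx Hy]%in_prod_iff; apply in_prod; apply (proj1 HF); auto.
  - intros [x y].
    destruct (exhaustion_eventually F x HF) as [i Hi], (exhaustion_eventually F y HF) as [j Hj].
    exists (Nat.max i j); apply in_prod; [apply Hi|apply Hj]; lia.
Qed.

Definition enum_at {V : Type} (e : V -> nat) (n : nat) : list V :=
  match excluded_middle_informative (exists z, e z = n) with
  | left H => [proj1_sig (constructive_indefinite_description _ H)]
  | right _ => []
  end.

Fixpoint enum_below {V : Type} (e : V -> nat) (n : nat) : list V :=
  match n with
  | O => []
  | S n => enum_below e n ++ enum_at e n
  end.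

Lemma enum_below_spec {V : Type} (e : V -> nat) :
  (forall x y, e x = e y -> x = y) -> forall n z, In z (enum_below e n) <-> (e z < n)%nat.
Proof.
  intros He n; induction n as [|n IH]; intro z; simpl; [split; [tauto|lia]|].
  rewrite in_app_iff, IH; unfold enum_at.
  destruct (excluded_middle_informative _) as [H|H].
  - destruct (constructive_indefinite_description _ H) as [w Hw]; simpl.
    split; [intros [Hl|[<-|[]]]; lia|].
    intro Hz; destruct (Nat.eq_dec (e z) n); [right; left; apply He; lia|left; lia].
  - split; [intros [Hl|[]]; lia|].
    intro Hz; destruct (Nat.eq_dec (e z) n); [exfalso; eauto|left; lia].
Qed.

Lemma exhaustion_of_injection {V : Type} (e : V -> nat) :
  (forall x y, e x = e y -> x = y) -> exhaustion (enum_below e).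
Proof.
  intros He; pose proof (enum_below_spec e He) as Hspec; split.
  - intros i y Hy; apply Hspec in Hy; apply Hspec; lia.
  - intro y; exists (S (e y)); apply Hspec; lia.
Qed.

(* Letting F exhaust V: stochastic completeness turns the finite-volume
   comparison into psi(x0,y0) <= B P~_t 1_W (x0,y0). *)
Lemma coupled_difference_limit {V : Type} (q : V -> V -> R) (nb : V -> list V)
  (qt : V * V -> V * V -> R) (nbt : V * V -> list (V * V)) (F : nat -> list V)
  psi B x0 y0 t pt :
  (forall a b, 0 <= q a b) -> (forall a b, 0 <= qt a b) ->
  (forall (f : V -> R) (x y : V),
    lap qt nbt (fun z => f (fst z)) (x, y) = lap q nb f x /\
    lap qt nbt (fun z => f (snd z)) (x, y) = lap q nb f y) ->
  exhaustion F -> stoch_complete q nb -> 0 <= t ->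
  (forall w, lap qt nbt psi w = 0) -> 0 <= B -> (forall z, psi z <= B * offdiag z) ->
  heat qt nbt t offdiag (x0, y0) pt ->
  psi (x0, y0) <= B * pt.
Proof.
  intros Hq Hqt Hcp HF Hsc Ht Hpsi HB Hoff Hheat.
  destruct (Hheat _ (exhaustion_prod F HF)) as [a [Sa Ca]].
  destruct (Hsc t x0 Ht F HF) as [bx [Sbx Cbx]], (Hsc t y0 Ht F HF) as [by_ [Sby Cby]].
  destruct (exhaustion_eventually F x0 HF) as [i1 Hi1], (exhaustion_eventually F y0 HF) as [i2 Hi2].
  assert (Hstep : forall i, (Nat.max i1 i2 <= i)%nat ->
                    psi (x0, y0) <= B * a i + B * (2 - bx i - by_ i)).
  { intros i Hi.
    (* a uniformization constant valid on both F i and F i x F i *)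
    set (c := 1 + lsum (deg q nb) (F i) + lsum (deg qt nbt) (list_prod (F i) (F i))).
    pose proof (lsum_nonneg (deg q nb) (F i) (deg_nonneg q nb Hq)).
    pose proof (lsum_nonneg (deg qt nbt) (list_prod (F i) (F i)) (deg_nonneg qt nbt Hqt)).
    apply (coupled_difference_heat q nb qt nbt (F i) c) with (t := t); auto.
    - unfold c; lra.
    - intros x Hx; pose proof (lsum_ge_term _ _ x (deg_nonneg q nb Hq) Hx); unfold c; lra.
    - intros z Hz; pose proof (lsum_ge_term _ _ z (deg_nonneg qt nbt Hqt) Hz); unfold c; lra.
    - apply Hi1; lia.
    - apply Hi2; lia.
    - apply is_series_Reals, Sa.
    - apply is_series_Reals, Sbx.
    - apply is_series_Reals, Sby. }
  assert (Hlim : is_lim_seq (fun i => B * a i + B * (2 - bx i - by_ i))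
                            (B * pt + B * (2 - 1 - 1))).
  { apply is_lim_seq_Reals in Ca, Cbx, Cby.
    apply is_lim_seq_plus'; apply is_lim_seq_mult'; try apply is_lim_seq_const; auto.
    apply is_lim_seq_minus'; auto; apply is_lim_seq_minus'; auto; apply is_lim_seq_const. }
  pose proof (is_lim_seq_le_loc (fun _ => psi (x0, y0)) _ (psi (x0, y0)) _
                (ex_intro _ _ Hstep) (is_lim_seq_const _) Hlim) as Hle.
  simpl in Hle; lra.
Qed.

Lemma nonpos_of_decaying_bound (a B : R) (p : R -> R) :
  0 <= B -> (forall t, 0 <= t -> a <= B * p t) ->
  (forall eps, 0 < eps -> exists T, forall t, T <= t -> Rabs (p t) < eps) ->
  a <= 0.
Proof.
  intros HB Hbound Hdecay.
  destruct (Rle_lt_dec a 0) as [Ha|Ha]; [exact Ha|exfalso].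
  destruct (Hdecay (a / (B + 1))) as [T HT]; [apply Rdiv_lt_0_compat; lra|].
  set (t := Rmax T 0).
  pose proof (Hbound t (Rmax_r T 0)) as Hat.
  pose proof (HT t (Rmax_l T 0)) as Hpt.
  pose proof (Rle_abs (p t)).
  assert (Hsmall : B * (a / (B + 1)) < a).
  { replace (B * (a / (B + 1))) with (a - a / (B + 1)) by (field; lra).
    assert (0 < a / (B + 1)) by (apply Rdiv_lt_0_compat; lra); lra. }
  assert (B * p t <= B * (a / (B + 1))) by (apply Rmult_le_compat_l; lra).
  lra.
Qed.

Lemma coupled_difference_harmonic {V : Type} (q : V -> V -> R) (nb : V -> list V)
  (qt : V * V -> V * V -> R) (nbt : V * V -> list (V * V)) (phi : V -> R) :
  (forall (f : V -> R) (x y : V),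
    lap qt nbt (fun z => f (fst z)) (x, y) = lap q nb f x /\
    lap qt nbt (fun z => f (snd z)) (x, y) = lap q nb f y) ->
  (forall x, lap q nb phi x = 0) ->
  forall w, lap qt nbt (fun z => phi (fst z) - phi (snd z)) w = 0.
Proof.
  intros Hcp Hharm [x y]; rewrite lap_minus.
  destruct (Hcp phi x y) as [-> ->]; rewrite !Hharm; ring.
Qed.

Lemma difference_offdiag_bound {V : Type} (phi : V -> R) M :
  (forall x, Rabs (phi x) <= M) -> forall z, phi (fst z) - phi (snd z) <= 2 * M * offdiag z.
Proof.
  intros HM [x y]; simpl; unfold offdiag; simpl.
  destruct (excluded_middle_informative (x = y)) as [<-|_]; [lra|].
  pose proof (HM x); pose proof (HM y); pose proof (Rle_abs (phi x)); pose proof (Rabs_maj2 (phi y)).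
  lra.
Qed.

Theorem mainTheorem14 (V : Type) (q : V -> V -> R) (nb : V -> list V)
  (qt : V * V -> V * V -> R) (nbt : V * V -> list (V * V)) :
  is_graph q nb -> reversible q -> stoch_complete q nb ->
  is_coupling q nb qt nbt ->
  (exists p : R -> V * V -> R,
      (forall t z, 0 <= t -> heat qt nbt t offdiag z (p t z)) /\
      (forall z eps, 0 < eps -> exists T, forall t, T <= t -> Rabs (p t z) < eps)) ->
  forall phi : V -> R,
    (exists C, forall x, Rabs (phi x) <= C) ->
    (forall x, lap q nb phi x = 0) ->
    forall x y, phi x = phi y.
Proof.
  intros [[e He] [Hq _]] _ Hsc [[_ [Hqt _]] Hcp] [p [Hheat Hdecay]] phi [M HM] Hharm.
  assert (Hle : forall x y, phi x - phi y <= 0).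
  { intros x y.
    assert (HB : 0 <= 2 * M) by (pose proof (Rabs_pos (phi x)); pose proof (HM x); lra).
    apply (nonpos_of_decaying_bound _ (2 * M) (fun t => p t (x, y)) HB); [|auto].
    intros t Ht.
    apply (coupled_difference_limit q nb qt nbt (enum_below e)
             (fun z => phi (fst z) - phi (snd z)) (2 * M) x y t); auto.
    - apply exhaustion_of_injection, He.
    - apply (coupled_difference_harmonic q nb), Hharm; exact Hcp.
    - apply difference_offdiag_bound, HM. }
  intros x y; pose proof (Hle x y); pose proof (Hle y x); lra.
Qed.
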